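(* Let $\mathbf A\in\mathbb C^{n\times n}$ with $\operatorname{Ind}\mathbf A=k$ and $\operatorname{rank}\mathbf A^{k+1}=\operatorname{rank}\mathbf A^{k}=r\le n$, let $\mathbf B\in\mathbb C^{n\times m}$, and let $\hat{\mathbf B}=\mathbf A^{k}\mathbf B$ with $j$-th column $\hat{\mathbf b}_{.j}$. Then the Drazin inverse solution $\mathbf X=\mathbf A^{D}\mathbf B=(x_{ij})\in\mathbb C^{n\times m}$ of $\mathbf A\mathbf X=\mathbf B$ satisfies, for all $i=1,\dots,n$, $j=1,\dots,m$, \[x_{ij}=\frac{\sum_{\beta\in J_{r,n}\{i\}}\left|\left(\mathbf A^{k+1}_{.i}(\hat{\mathbf b}_{.j})\right)^{\beta}_{\beta}\right|}{\sum_{\beta\in J_{r,n}}\left|(\mathbf A^{k+1})^{\beta}_{\beta}\right|}.\]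
   Context: $\operatorname{Ind}\mathbf A$ is the smallest nonnegative $k$ with $\operatorname{rank}\mathbf A^{k+1}=\operatorname{rank}\mathbf A^{k}$; the Drazin inverse $\mathbf A^{D}$ is the unique $\mathbf X$ with $\mathbf A^{k+1}\mathbf X=\mathbf A^{k}$, $\mathbf X\mathbf A\mathbf X=\mathbf X$, $\mathbf A\mathbf X=\mathbf X\mathbf A$. $\mathbf M_{.i}(\mathbf c)$ denotes $\mathbf M$ with its $i$-th column replaced by $\mathbf c$. $J_{r,n}$ is the set of strictly increasing sequences of $r$ elements of $\{1,\dots,n\}$, $J_{r,n}\{i\}=\{\beta\in J_{r,n}:i\in\beta\}$, $\mathbf M^{\beta}_{\beta}$ is the principal submatrix indexed by $\beta$, $|\cdot|$ is the determinant. *)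

From HB Require Import structures.
From mathcomp Require Import all_boot all_order all_algebra.
Set Implicit Arguments. Unset Strict Implicit. Unset Printing Implicit Defensive.
Import GRing.Theory Num.Theory.
Local Open Scope ring_scope.

Definition is_index (R : fieldType) (n : nat) (A : 'M[R]_n) (k : nat) : Prop :=
  \rank (A ^+ k.+1) = \rank (A ^+ k) /\
  (forall k', (k' < k)%N -> \rank (A ^+ k'.+1) <> \rank (A ^+ k')).

Definition is_drazin_inv (R : fieldType) (n : nat) (A : 'M[R]_n) (X : 'M[R]_n) : Prop :=
  exists k, [/\ is_index A k, A ^+ k.+1 * X = A ^+ k, X * A * X = X & A * X = X * A].

Definition colrep (R : fieldType) (n : nat) (M : 'M[R]_n) (i : 'I_n) (c : 'cV[R]_n)
  : 'M[R]_n := \matrix_(p, q) if q == i then c p 0 else M p q.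

Definition pminor (R : fieldType) (n : nat) (M : 'M[R]_n) (beta : {set 'I_n}) : R :=
  \det (\matrix_(p < #|beta|, q < #|beta|)
          M (@enum_val _ (mem beta) p) (@enum_val _ (mem beta) q)).

From HB Require Import structures.
From mathcomp Require Import all_boot all_order all_algebra all_fingroup.
Set Implicit Arguments. Unset Strict Implicit. Unset Printing Implicit Defensive.
From mathcomp Require Import zify.
Import GRing.Theory Num.Theory.
Local Open Scope ring_scope.

(* Put M = A^(k+1).  Then rank M^2 = rank M = r, and with Z = AD^((k+1)n+1) B
   we have AD B = M^n Z and A^k B = M^(n+1) Z.  The coefficient of X^(n-r) in
   det (X I + M) is the sum of the r x r principal minors of M; the lower
   coefficients vanish and this one is nonzero, because M is similar to a matrix
   whose rows beyond the r-th are zero and whose leading r x r block is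
   invertible.  Comparing coefficients of X^(n-r) in
   adj (X I + M) M^(s+1) = det (X I + M) M^s - X adj (X I + M) M^s
   yields the numerator as that coefficient times (M^n Z)_ij, and the numerator
   is recognised through Cramer's rule and the principal-minor expansion of
   det (X I + M) with its i-th column replaced. *)

Section PrincipalPad.
Variable R : comPzRingType.

Definition pad_mx n (S : {set 'I_n}) (M : 'M[R]_n) : 'M[R]_n :=
  \matrix_(a, b) if (a \in S) && (b \in S) then M a b else (a == b)%:R.

Lemma prod_perm_diag_pad n (s : 'S_n) (T : {set 'I_n}) (d : 'I_n -> R)
    (M : 'M[R]_n) :
  \prod_i (if i \in T then (i == s i)%:R * d i else M i (s i)) =
  (\prod_(l in T) d l) * \prod_i pad_mx (~: T) M i (s i).
Proof.
have [/forall_inP fix_s | ] := boolP [forall i in T, s i == i]; last first.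
  rewrite negb_forall_in => /existsP [i /andP [iT si]].
  rewrite (bigD1 i) //= iT eq_sym (negbTE si) !mul0r.
  rewrite [X in _ * X](bigD1 i) //= mxE !inE iT /= eq_sym (negbTE si).
  by rewrite !(mul0r, mulr0).
rewrite [LHS](bigID (mem T)) [X in _ * X](bigID (mem T)) /= mulrA.
congr (_ * _).
  rewrite [X in _ = _ * X]big1 ?mulr1 => [|i iT]; last first.
    by rewrite mxE !inE iT /= (eqP (fix_s i iT)) eqxx.
  by apply: eq_bigr => i iT; rewrite iT (eqP (fix_s i iT)) eqxx mul1r.
apply: eq_bigr => i iT; rewrite (negbTE iT) mxE !inE iT /=.
case: ifP => // /negbFE siT.
by move: iT; rewrite -(perm_inj (eqP (fix_s _ siT))) siT.
Qed.

Lemma det_diag_add n (d : 'I_n -> R) (M : 'M[R]_n) :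
  \det (\matrix_(a, b) ((a == b)%:R * d a + M a b)) =
  \sum_(S : {set 'I_n}) (\prod_(l in ~: S) d l) * \det (pad_mx S M).
Proof.
rewrite [RHS](reindex_inj (@setC_inj _)) /=.
under [RHS]eq_bigr do rewrite setCK /determinant mulr_sumr.
rewrite exchange_big /=; apply: eq_bigr => s _.
under eq_bigr do rewrite mxE.
rewrite bigA_distr mulr_sumr; apply: eq_bigr => T _.
by rewrite prod_perm_diag_pad mulrCA.
Qed.

Lemma det_mxsub_perm n (s : 'S_n) (M : 'M[R]_n) : \det (mxsub s s M) = \det M.
Proof.
have -> : mxsub s s M = row_perm s (col_perm s M).
  by apply/matrixP => a b; rewrite !mxE.
rewrite row_permE col_permE !det_mulmx !det_perm odd_permV mulrCA.
by rewrite -signr_addb addbb mulr1.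
Qed.

Lemma det_mxsub_pad n m (f : 'I_m -> 'I_n) (M : 'M[R]_n) : injective f ->
  \det (mxsub f f M) = \det (pad_mx (f @: setT) M).
Proof.
elim: n M m f => [|n IH] M m f f_inj.
  by case: m f f_inj => [|m] f; [rewrite !det_mx00 | case: (f ord0)].
have [a aS | f_onto] := pickP (fun a => a \notin f @: setT); last first.
  have inS b : b \in f @: setT by apply/negbFE/f_onto.
  have Emn : m = n.+1.
    rewrite -[m]card_ord -cardsT -(card_imset _ f_inj).
    have -> : f @: setT = [set: 'I_n.+1] by apply/setP => b; rewrite inS inE.
    by rewrite cardsT card_ord.
  subst m; have -> : pad_mx (f @: setT) M = M.
    by apply/matrixP => b c; rewrite mxE !inS.
  rewrite -(det_mxsub_perm (perm f_inj) M); congr (\det _).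
  by apply/matrixP => b c; rewrite !mxE !permE.
have fa p : a != f p by apply: contraNneq aS => ->; rewrite imset_f ?inE.
case: m f f_inj fa aS => [|m] f f_inj fa aS.
  have -> : f @: setT = set0 by apply/setP => b; rewrite inE; apply/imsetP => -[[]].
  have -> : pad_mx set0 M = 1%:M by apply/matrixP => b c; rewrite !mxE inE.
  by rewrite det1 det_mx00.
have [b0 _ _] := unlift_some (fa ord0).
pose g p := odflt b0 (unlift a (f p)).
have fE p : f p = lift a (g p) by rewrite /g; case: (unlift_some (fa p)) => b -> ->.
have g_inj : injective g by move=> p q e; apply: f_inj; rewrite !fE e.
have inS b : (lift a b \in f @: setT) = (b \in g @: setT).
  apply/imsetP/imsetP => -[p _ e]; exists p => //; last by rewrite e fE.
  by apply: (@lift_inj _ a); rewrite -fE.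
rewrite (expand_det_row _ a) (bigD1 a) //= big1 ?addr0 => [|b ba]; last first.
  by rewrite mxE (negbTE aS) eq_sym (negbTE ba) mul0r.
rewrite mxE (negbTE aS) eqxx mul1r /cofactor -signr_odd addnn odd_double mul1r.
have -> : mxsub f f M = mxsub g g (row' a (col' a M)).
  by apply/matrixP => p q; rewrite !mxE !fE.
rewrite IH //; congr (\det _); apply/matrixP => b c.
by rewrite !mxE !inS (inj_eq lift_inj).
Qed.

Lemma det_col_replace n (Q : 'M[R]_n) (i : 'I_n) (c : 'cV[R]_n) :
  \det (\matrix_(a, b) if b == i then c a 0 else Q a b) = (\adj Q *m c) i 0.
Proof.
rewrite (expand_det_col _ i) mxE; apply: eq_bigr => a _.
rewrite !mxE eqxx mulrC; congr (_ * _); rewrite /cofactor; congr (_ * \det _).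
apply/matrixP => x y; rewrite !mxE.
by rewrite eq_sym (negbTE (neq_lift _ _)).
Qed.

End PrincipalPad.

Section XaddMx.
Variable R : comNzRingType.

Definition Xadd_mx n (N : 'M[R]_n) : 'M[{poly R}]_n := 'X%:M + map_mx polyC N.

Lemma Xadd_mxE n (N : 'M[R]_n) :
  Xadd_mx N = \matrix_(a, b) ((a == b)%:R * 'X + map_mx polyC N a b).
Proof. by apply/matrixP => a b; rewrite !mxE mulr_natl. Qed.

Lemma pad_map_mx n (S : {set 'I_n}) (N : 'M[R]_n) :
  pad_mx S (map_mx polyC N) = map_mx polyC (pad_mx S N).
Proof. by apply/matrixP => a b; rewrite !mxE; case: ifP; rewrite ?rmorph_nat. Qed.

Lemma det_Xadd_mx n (N : 'M[R]_n) :
  \det (Xadd_mx N) = \sum_(S : {set 'I_n}) 'X^(n - #|S|) * (\det (pad_mx S N))%:P.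
Proof.
rewrite Xadd_mxE det_diag_add; apply: eq_bigr => S _.
by rewrite pad_map_mx det_map_mx prodr_const cardsCs setCK card_ord.
Qed.

Lemma coef_sum_Xcard n (c : {set 'I_n} -> R) e :
  (\sum_(S : {set 'I_n}) 'X^(n - #|S|) * (c S)%:P)`_e =
  \sum_(S : {set 'I_n} | (n - #|S|)%N == e) c S.
Proof.
rewrite coef_sum [RHS]big_mkcond /=; apply: eq_bigr => S _.
by rewrite coefMC coefXn eq_sym; case: eqP; rewrite ?mul1r ?mul0r.
Qed.

Lemma coef_sum_Xcard_sub n (c : {set 'I_n} -> R) r : (r <= n)%N ->
  (\sum_(S : {set 'I_n}) 'X^(n - #|S|) * (c S)%:P)`_(n - r) =
  \sum_(S : {set 'I_n} | #|S| == r) c S.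
Proof.
move=> le_rn; rewrite coef_sum_Xcard; apply: eq_bigl => S.
have le_Sn : (#|S| <= n)%N by rewrite -[leqRHS]card_ord max_card.
by apply/eqP/eqP => ?; lia.
Qed.

Lemma adj_Xadd_mulmx n m (N : 'M[R]_n) (Y : 'M[R]_(n, m)) :
  \adj (Xadd_mx N) *m map_mx polyC (N *m Y) =
  \det (Xadd_mx N) *: map_mx polyC Y - 'X *: (\adj (Xadd_mx N) *m map_mx polyC Y).
Proof.
rewrite map_mxM; have -> : map_mx polyC N = Xadd_mx N - 'X%:M.
  by rewrite addrAC subrr add0r.
rewrite mulmxA mulmxBr mul_adj_mx mul_mx_scalar mulmxBl mul_scalar_mx.
by rewrite scalemxAl.
Qed.

Lemma coef_adj_Xadd_pow n m (N : 'M[R]_n) (Y : 'M[R]_(n, m)) t s a b :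
    (forall e, (e < t)%N -> (\det (Xadd_mx N))`_e = 0) -> (t <= s)%N ->
  ((\adj (Xadd_mx N) *m map_mx polyC (N ^+ s.+1 *m Y)) a b)`_t =
  (\det (Xadd_mx N))`_t * (N ^+ s *m Y) a b.
Proof.
move=> low le_ts.
pose v s' := (\adj (Xadd_mx N) *m map_mx polyC (N ^+ s' *m Y)) a b.
have vS s' e : (v s'.+1)`_e =
    (\det (Xadd_mx N))`_e * (N ^+ s' *m Y) a b -
    (if e is e'.+1 then (v s')`_e' else 0).
  rewrite /v exprS -mulmxE -mulmxA adj_Xadd_mulmx !mxE coefB coefMC coefXM.
  by case: e.
have vanish e s' : (e < t)%N -> (e < s')%N -> (v s')`_e = 0.
  elim: e s' => [|e IH] [|s'] // lt_et lt_es; rewrite vS low ?mul0r ?subr0 //.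
  by rewrite IH ?subr0 // ltnW.
rewrite -/(v s.+1) vS; case: t low le_ts vanish => [|t] _ le_ts vanish.
  by rewrite subr0.
by rewrite vanish ?subr0.
Qed.

End XaddMx.

Section PrincipalMinors.
Variable F : fieldType.

Lemma pminor_pad n (M : 'M[F]_n) (beta : {set 'I_n}) :
  pminor M beta = \det (pad_mx beta M).
Proof.
rewrite /pminor (det_mxsub_pad _ enum_val_inj); congr (\det (pad_mx _ M)).
apply/setP => a; apply/imsetP/idP => [[x _ ->]|a_beta]; first exact: enum_valP.
by exists (enum_rank_in a_beta a); rewrite ?inE ?enum_rankK_in.
Qed.

Lemma coef_det_Xadd_mx n (N : 'M[F]_n) r : (r <= n)%N ->
  (\det (Xadd_mx N))`_(n - r) = \sum_(beta : {set 'I_n} | #|beta| == r) pminor N beta.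
Proof.
move=> le_rn; rewrite det_Xadd_mx coef_sum_Xcard_sub //.
by under eq_bigr do rewrite -pminor_pad.
Qed.

Lemma coef_adj_Xadd_col n (N : 'M[F]_n) (c : 'cV[F]_n) i r : (r <= n)%N ->
  ((\adj (Xadd_mx N) *m map_mx polyC c) i 0)`_(n - r) =
  \sum_(beta : {set 'I_n} | (#|beta| == r) && (i \in beta)) pminor (colrep N i c) beta.
Proof.
move=> le_rn; pose d l : {poly F} := if l == i then 0 else 'X.
rewrite -det_col_replace.
have -> : \matrix_(a, b) (if b == i then map_mx polyC c a 0 else Xadd_mx N a b) =
    \matrix_(a, b) ((a == b)%:R * d a + map_mx polyC (colrep N i c) a b).
  apply/matrixP => a b; rewrite !mxE /d.
  have [->|bi] := eqVneq b i; first by case: eqVneq; rewrite ?mulr0 ?mul0r ?add0r.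
  by case: eqVneq => [ab|]; rewrite ?mul0r ?mulr_natl // ab (negbTE bi).
rewrite det_diag_add big_mkcondr /= -coef_sum_Xcard_sub //.
apply: (congr1 (fun p : {poly F} => p`_(n - r))); apply: eq_bigr => S _.
rewrite pad_map_mx det_map_mx -pminor_pad.
have [iS|iS] := boolP (i \in S); last first.
  rewrite (bigD1 i) /=; last by rewrite inE.
  by rewrite /d eqxx !mul0r polyC0 mulr0.
rewrite (eq_bigr (fun _ => 'X)) => [|l]; last first.
  by rewrite inE /d; case: eqP => // ->; rewrite iS.
by rewrite prodr_const [#|~: S|]cardsCs setCK card_ord.
Qed.

End PrincipalMinors.

Lemma pid_mulmxE (R : pzSemiRingType) n p r (W : 'M[R]_(n, p)) a b :
  ((pid_mx r : 'M_n) *m W) a b = if (a < r)%N then W a b else 0.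
Proof.
rewrite mxE (bigD1 a) //= big1 => [|c ca]; last first.
  rewrite mxE (_ : (a == c :> nat) = false) ?mul0r //.
  by apply: contraNF ca => /eqP/val_inj->.
by rewrite mxE eqxx addr0; case: ifP; rewrite ?mul1r ?mul0r.
Qed.

Section IndexOne.
Variable F : fieldType.

Lemma det_Xadd_conj n (N Q L : 'M[F]_n) : L \in unitmx -> L *m Q = N *m L ->
  \det (Xadd_mx Q) = \det (Xadd_mx N).
Proof.
move=> L_unit LQ_NL.
have : map_mx polyC L *m Xadd_mx Q = Xadd_mx N *m map_mx polyC L.
  by rewrite mulmxDr mulmxDl mul_mx_scalar mul_scalar_mx -!map_mxM LQ_NL.
move/(congr1 determinant); rewrite !det_mulmx det_map_mx [LHS]mulrC.
by apply: mulIf; rewrite polyC_eq0 -unitfE -unitmxE.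
Qed.

Lemma coef_det_Xadd_pid n r (W : 'M[F]_n) (le_rn : (r <= n)%N) :
  let w := widen_ord le_rn in
  (forall e, (e < n - r)%N -> (\det (Xadd_mx (pid_mx r *m W)))`_e = 0) /\
  (\det (Xadd_mx (pid_mx r *m W)))`_(n - r) = \det (mxsub w w W).
Proof.
move=> w; set K := pid_mx r *m W; set S0 := w @: setT.
have w_inj : injective w by move=> p q /(congr1 val) /= /val_inj.
have cardS0 : #|S0| = r by rewrite card_imset // cardsT card_ord.
have inS0 l : (l \in S0) = (l < r)%N.
  apply/imsetP/idP => [[p _ ->]|lr]; first exact: (ltn_ord p).
  by exists (Ordinal lr); rewrite ?inE //; apply: val_inj.
have padK0 (S : {set 'I_n}) : ~~ (S \subset S0) -> \det (pad_mx S K) = 0.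
  case/subsetPn => l lS; rewrite inS0 -leqNgt => le_rl.
  rewrite (expand_det_row _ l) big1 // => b _; rewrite mxE lS /=.
  case: ifP => [_|bS]; first by rewrite pid_mulmxE ltnNge le_rl mul0r.
  by rewrite (_ : (l == b) = false) ?mul0r //; apply: contraFF bS => /eqP <-.
split=> [e lt_e|].
  rewrite det_Xadd_mx coef_sum_Xcard big1 // => S /eqP eS; apply: padK0.
  by apply/negP => /subset_leq_card; rewrite cardS0; lia.
rewrite det_Xadd_mx coef_sum_Xcard_sub // (bigD1 S0) /=; last by rewrite cardS0.
rewrite big1 ?addr0 => [|S /andP [/eqP cS nS]]; last first.
  by apply: padK0; apply: contra nS => sub; rewrite eqEcard sub cardS0 cS /=.
rewrite -det_mxsub_pad //; congr (\det _); apply/matrixP => p q.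
by rewrite mxE [RHS]mxE pid_mulmxE (ltn_ord p).
Qed.

Lemma coef_det_Xadd_index1 n (N : 'M[F]_n) : \rank (N *m N) = \rank N ->
  (forall e, (e < n - \rank N)%N -> (\det (Xadd_mx N))`_e = 0) /\
  (\det (Xadd_mx N))`_(n - \rank N) != 0.
Proof.
move=> rkNN; set r := \rank N; have le_rn : (r <= n)%N := rank_leq_row N.
set L := col_ebase N; set U := row_ebase N; set W := U *m L.
have NE : N = L *m pid_mx r *m U by rewrite mulmx_ebase.
have -> : \det (Xadd_mx N) = \det (Xadd_mx (pid_mx r *m W)).
  by symmetry; apply: (det_Xadd_conj (col_ebase_unit N)); rewrite /W {2}NE !mulmxA.
have [low ->] := coef_det_Xadd_pid W le_rn; split; first exact: low.
set w := widen_ord le_rn.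
have pidE : (pid_mx r : 'M[F]_n) = colsub w 1%:M *m rowsub w 1%:M.
  by rewrite -pid_mxEcol -pid_mxErow mul_pid_mx (minn_idPr le_rn) minnn.
have subE : rowsub w 1%:M *m W *m colsub w 1%:M = mxsub w w W.
  by rewrite mul_rowsub_mx mul1mx mulmx_colsub mulmx1 -mxsubcr.
have NNE : N *m N = L *m (colsub w 1%:M *m mxsub w w W *m rowsub w 1%:M) *m U.
  by rewrite -subE {1 2}NE pidE !mulmxA.
have rk_sub : (r <= \rank (mxsub w w W))%N.
  rewrite -[leqLHS]rkNN NNE (leq_trans (mxrankM_maxl _ _)) //.
  rewrite (leq_trans (mxrankM_maxr _ _)) // (leq_trans (mxrankM_maxl _ _)) //.
  exact: mxrankM_maxr.
by rewrite -unitfE -unitmxE -row_free_unit /row_free eqn_leq rank_leq_row rk_sub.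
Qed.

Lemma index1_cramer n m (N : 'M[F]_n) (Z : 'M[F]_(n, m)) i j :
    \rank (N *m N) = \rank N ->
  (N ^+ n *m Z) i j =
  (\sum_(beta : {set 'I_n} | (#|beta| == \rank N) && (i \in beta))
      pminor (colrep N i (col j (N ^+ n.+1 *m Z))) beta) /
  (\sum_(beta : {set 'I_n} | #|beta| == \rank N) pminor N beta).
Proof.
move=> rkNN; have le_rn := rank_leq_row N.
have [low top] := coef_det_Xadd_index1 rkNN.
rewrite -coef_adj_Xadd_col // -coef_det_Xadd_mx //.
have -> : (\adj (Xadd_mx N) *m map_mx polyC (col j (N ^+ n.+1 *m Z))) i 0 =
    (\adj (Xadd_mx N) *m map_mx polyC (N ^+ n.+1 *m Z)) i j.
  by rewrite !mxE; apply: eq_bigr => a _; rewrite !mxE.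
by rewrite coef_adj_Xadd_pow ?leq_subr // [RHS]mulrC mulKf.
Qed.

End IndexOne.

Section DrazinPowers.
Variable R : pzRingType.

Lemma drazin_exprK (a q : R) k : a ^+ k.+1 * q = a ^+ k ->
  forall j, a ^+ (k + j) * q ^+ j = a ^+ k.
Proof.
move=> D1; elim=> [|j IH]; first by rewrite addn0 expr0 mulr1.
rewrite -addSnnS [(k.+1 + j)%N]addnC exprD [q ^+ _.+1]exprS mulrA.
by rewrite -(mulrA (a ^+ j)) D1 -exprD addnC IH.
Qed.

Lemma drazin_expr_mul (a q : R) : q * a * q = q -> a * q = q * a ->
  forall j, q = a ^+ j * q ^+ j.+1.
Proof.
move=> D2 D3; elim=> [|j IH]; first by rewrite expr0 mul1r expr1.
have aqS : a * q ^+ j.+2 = q ^+ j.+1 by rewrite 2!exprS mulrA D3 mulrA D2.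
by rewrite exprSr -mulrA aqS -IH.
Qed.

End DrazinPowers.

Lemma is_index_uniq (F : fieldType) n (A : 'M[F]_n) k k' :
  is_index A k -> is_index A k' -> k = k'.
Proof.
move=> [rk_k min_k] [rk_k' min_k'].
apply/eqP; rewrite eqn_leq; apply/andP; split; rewrite leqNgt; apply/negP => lt.
  exact: min_k _ lt rk_k'.
exact: min_k' _ lt rk_k.
Qed.

Lemma rank_drazin_expr (F : fieldType) n (A X : 'M[F]_n) k q :
  A ^+ k.+1 * X = A ^+ k -> \rank (A ^+ (k + q)) = \rank (A ^+ k).
Proof.
move=> D1; apply/eqP; rewrite eqn_leq; apply/andP; split.
  by rewrite exprD -mulmxE mxrankM_maxl.
by rewrite -[X in (\rank X <= _)%N](drazin_exprK D1 q) -mulmxE mxrankM_maxl.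
Qed.

Theorem theorem4p5 (C : numClosedFieldType) (n m k r : nat)
  (A : 'M[C]_n) (B : 'M[C]_(n, m)) (AD : 'M[C]_n) :
  is_index A k ->
  \rank (A ^+ k) = r ->
  is_drazin_inv A AD ->
  let Bhat := A ^+ k *m B in
  let X := AD *m B in
  forall (i : 'I_n) (j : 'I_m),
    X i j =
      (\sum_(beta : {set 'I_n} | (#|beta| == r) && (i \in beta))
          pminor (colrep (A ^+ k.+1) i (col j Bhat)) beta) /
      (\sum_(beta : {set 'I_n} | #|beta| == r) pminor (A ^+ k.+1) beta).
Proof.
move=> idx rkAk [k' [idx' D1 D2 D3]] Bhat X i j.
have ek := is_index_uniq idx idx'; subst k'.
set M := A ^+ k.+1.
have rkM : \rank M = r by rewrite -rkAk -(rank_drazin_expr 1 D1) addn1.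
have rkMM : \rank (M *m M) = \rank M.
  by rewrite rkM mulmxE -exprD addSn -addnS (rank_drazin_expr _ D1).
pose Z := AD ^+ (k.+1 * n).+1 *m B.
have XE : X = M ^+ n *m Z.
  by rewrite /X /Z mulmxA mulmxE -exprM -(drazin_expr_mul D2 D3).
have BhatE : Bhat = M ^+ n.+1 *m Z.
  by rewrite /Bhat -D1 -mulmxE -mulmxA -/X XE mulmxA mulmxE -exprS.
by rewrite XE BhatE -rkM; apply: index1_cramer.
Qed.
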